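(* Let $\mathbb{S}\subseteq\mathbb{R}$ be an interval, let $\gamma>0$, and let $f:\mathbb{S}\to(0,\infty)$ be twice differentiable such that $H(z)=\gamma\log\big(1+[f(z)]^{1/\gamma}\big)$ is twice continuously differentiable on $\mathbb{S}$. Then the scalar matching loss $\mathcal{L}_m(\hat s,s)=H(\hat s)-H(s)-(\hat s-s)H'(s)$ is convex in $\hat s$ over $\mathbb{S}$ (for all $s\in\mathbb{S}$) if and only if $$f''(z)+\Big[\frac1\gamma-1-\frac1\gamma\cdot\frac{[f(z)]^{1/\gamma}}{1+[f(z)]^{1/\gamma}}\Big]\frac{[f'(z)]^2}{f(z)}\ge0\quad\text{for all }z\in\mathbb{S}.$$
   Context: $f$ is the score-transform function; equivalently $f=e^{Q}$ with $Q$ the log score-transform, and $H(z)=\gamma\log(1+e^{Q(z)/\gamma})$ is the $\gamma$-regularized composite Softplus primitive. *)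

From Stdlib Require Import Reals.
From Coquelicot Require Import Coquelicot.
Open Scope R_scope.

Definition is_interval (S : R -> Prop) : Prop :=
  forall x y z, S x -> S y -> x <= z <= y -> S z.

Definition Hsp (gamma : R) (f : R -> R) (z : R) : R :=
  gamma * ln (1 + Rpower (f z) (/ gamma)).

Definition Lm (H : R -> R) (shat s : R) : R :=
  H shat - H s - (shat - s) * Derive H s.

Definition convex_on (S : R -> Prop) (g : R -> R) : Prop :=
  forall x y t, S x -> S y -> 0 <= t <= 1 ->
    g (t * x + (1 - t) * y) <= t * g x + (1 - t) * g y.

(* Since L_m(., s) differs from H by an affine function of shat, convexity of
   every L_m(., s) is convexity of H, which on a nondegenerate interval means
   H'' >= 0.  Writing p = f^(1/gamma), one computes H' = w f' and
   H'' = w (f'' + (1/gamma - 1 - (1/gamma) p/(1+p)) f'^2/f) with the positive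
   weight w = p / (f (1 + p)), so H'' >= 0 is exactly the stated condition. *)

From Stdlib Require Import Reals Lra.
From Coquelicot Require Import Coquelicot.
Open Scope R_scope.

Definition slope (F : R -> R) (x y : R) : R := (F y - F x) / (y - x).

Definition nondecreasing_on (S : R -> Prop) (g : R -> R) : Prop :=
  forall x y, S x -> S y -> x <= y -> g x <= g y.

Lemma slope_sym (F : R -> R) (x y : R) : slope F x y = slope F y x.
Proof.
  unfold slope, Rdiv.
  rewrite <- (Ropp_minus_distr (F x)), <- (Ropp_minus_distr x), Rinv_opp.
  ring.
Qed.

Lemma slope_mul (F : R -> R) (x y : R) : x <> y -> slope F x y * (y - x) = F y - F x.
Proof. intros Hxy. unfold slope. field. lra. Qed.

Lemma is_derive_le_of_slope_le (F : R -> R) (z l M : R) :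
  is_derive F z l ->
  (forall d, 0 < d -> exists y, y <> z /\ Rabs (y - z) < d /\ slope F z y <= M) ->
  l <= M.
Proof.
  intros HD Hnear.
  destruct (Rle_or_lt l M) as [|HMl]; [assumption | exfalso].
  apply is_derive_Reals in HD.
  destruct (HD (l - M) ltac:(lra)) as [[d Hd] Hclose].
  destruct (Hnear d Hd) as [y [Hyz [Hyd Hslope]]].
  specialize (Hclose (y - z) ltac:(lra) Hyd).
  replace (z + (y - z)) with y in Hclose by ring.
  apply Rabs_def2 in Hclose.
  unfold slope in Hslope. lra.
Qed.

Lemma is_derive_ge_of_slope_ge (F : R -> R) (z l M : R) :
  is_derive F z l ->
  (forall d, 0 < d -> exists y, y <> z /\ Rabs (y - z) < d /\ M <= slope F z y) ->
  M <= l.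
Proof.
  intros HD Hnear.
  enough (- l <= - M) by lra.
  apply (is_derive_le_of_slope_le (fun x => - F x) z).
  - exact (is_derive_opp F z l HD : is_derive (fun x => - F x) z (- l)).
  - intros d Hd. destruct (Hnear d Hd) as [y [Hyz [Hyd Hslope]]].
    exists y. repeat split; try assumption.
    replace (slope (fun x => - F x) z y) with (- slope F z y)
      by (unfold slope; field; lra).
    lra.
Qed.

Lemma exists_between_near (x y z d : R) :
  x < y -> x <= z <= y -> 0 < d ->
  exists w, x < w < y /\ w <> z /\ Rabs (w - z) < d.
Proof.
  intros Hxy Hz Hd.
  destruct (Rlt_or_le z y) as [Hzy | Hyz].
  - pose proof (Rmin_l d (y - z)). pose proof (Rmin_r d (y - z)).
    pose proof (Rmin_pos d (y - z) Hd ltac:(lra)).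
    exists (z + Rmin d (y - z) / 2).
    rewrite Rabs_right by lra. repeat split; lra.
  - pose proof (Rmin_l d (z - x)). pose proof (Rmin_r d (z - x)).
    pose proof (Rmin_pos d (z - x) Hd ltac:(lra)).
    exists (z - Rmin d (z - x) / 2).
    rewrite Rabs_left by lra. repeat split; lra.
Qed.

Lemma convex_on_slope_le (S : R -> Prop) (H : R -> R) (x w y : R) :
  convex_on S H -> S x -> S y -> x < w < y ->
  slope H x w <= slope H x y /\ slope H x y <= slope H w y.
Proof.
  intros Hconv Hx Hy Hw.
  set (t := (w - x) / (y - x)).
  assert (Hw_comb : w = t * y + (1 - t) * x) by (unfold t; field; lra).
  assert (Ht : 0 < t < 1) by (split; nra).
  pose proof (Hconv y x t Hy Hx ltac:(lra)) as Hchord.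
  rewrite <- Hw_comb in Hchord.
  pose proof (slope_mul H x w ltac:(lra)) as Exw.
  pose proof (slope_mul H x y ltac:(lra)) as Exy.
  pose proof (slope_mul H w y ltac:(lra)) as Ewy.
  assert (Ewx : w - x = t * (y - x)) by (rewrite Hw_comb; ring).
  assert (Eyw : y - w = (1 - t) * (y - x)) by (rewrite Hw_comb; ring).
  rewrite Ewx in Exw. rewrite Eyw in Ewy.
  split; apply (Rmult_le_reg_r (t * (1 - t) * (y - x))); nra.
Qed.

Lemma convex_on_Derive_le (S : R -> Prop) (H : R -> R) (x y : R) :
  convex_on S H -> S x -> S y -> x <= y -> ex_derive H x -> ex_derive H y ->
  Derive H x <= Derive H y.
Proof.
  intros Hconv Hx Hy Hxy Dx Dy.
  destruct (Req_dec x y) as [<- | Hne]; [lra |].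
  apply Rle_trans with (slope H x y).
  - apply (is_derive_le_of_slope_le H x); [exact (Derive_correct H x Dx) |].
    intros d Hd. destruct (exists_between_near x y x d ltac:(lra) ltac:(lra) Hd)
      as [w [Hw [Hwx Hwd]]].
    exists w. repeat split; try assumption.
    apply (convex_on_slope_le S); assumption.
  - apply (is_derive_ge_of_slope_ge H y); [exact (Derive_correct H y Dy) |].
    intros d Hd. destruct (exists_between_near x y y d ltac:(lra) ltac:(lra) Hd)
      as [w [Hw [Hwy Hwd]]].
    exists w. repeat split; try assumption.
    rewrite (slope_sym H y w). apply (convex_on_slope_le S); assumption.
Qed.

Lemma convex_on_Lm_iff (S : R -> Prop) (H : R -> R) (s : R) :
  convex_on S (fun shat => Lm H shat s) <-> convex_on S H.
Proof.
  unfold convex_on, Lm.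
  assert (Eaffine : forall x y t,
    (t * x + (1 - t) * y - s) * Derive H s
    = t * ((x - s) * Derive H s) + (1 - t) * ((y - s) * Derive H s)) by (intros; ring).
  split; intros Hconv x y t Hx Hy Ht; specialize (Hconv x y t Hx Hy Ht);
    rewrite Eaffine in *; lra.
Qed.

Section NondegenerateInterval.

Variable S : R -> Prop.
Hypothesis S_interval : is_interval S.
Hypothesis S_nondegenerate : exists a b, S a /\ S b /\ a < b.

Lemma interval_exists_near (z d : R) :
  S z -> 0 < d -> exists y, S y /\ y <> z /\ Rabs (y - z) < d.
Proof.
  intros Hz Hd. destruct S_nondegenerate as [a [b [Ha [Hb Hab]]]].
  pose proof (Rmin_l a z). pose proof (Rmin_r a z).
  pose proof (Rmax_l b z). pose proof (Rmax_r b z).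
  destruct (exists_between_near (Rmin a z) (Rmax b z) z d ltac:(lra) ltac:(lra) Hd)
    as [y [Hy Hnear]].
  exists y. split; [| exact Hnear].
  destruct (Rle_or_lt y z).
  - apply (S_interval (Rmin a z) z); [apply Rmin_case | | lra]; assumption.
  - apply (S_interval z (Rmax b z)); [| apply Rmax_case | lra]; assumption.
Qed.

Lemma nondecreasing_on_is_derive_ge0 (F : R -> R) (z l : R) :
  nondecreasing_on S F -> S z -> is_derive F z l -> 0 <= l.
Proof.
  intros Hmono Hz HD.
  apply (is_derive_ge_of_slope_ge F z); [exact HD |].
  intros d Hd. destruct (interval_exists_near z d Hz Hd) as [y [Hy [Hyz Hyd]]].
  exists y. repeat split; try assumption.
  destruct (Rlt_or_le z y).
  - apply Rdiv_le_0_compat; [pose proof (Hmono z y Hz Hy); lra | lra].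
  - rewrite slope_sym.
    apply Rdiv_le_0_compat; [pose proof (Hmono y z Hy Hz); lra | lra].
Qed.

(* [S] need not be open, so agreeing on [S] does not make two functions locally
   equal; the derivatives at [z] still coincide because [S] reaches [z] from
   at least one side. *)
Lemma is_derive_eq_on (F G : R -> R) (z l1 l2 : R) :
  (forall y, S y -> F y = G y) -> S z ->
  is_derive F z l1 -> is_derive G z l2 -> l1 = l2.
Proof.
  intros HFG Hz DF DG.
  assert (Hconst : forall K, (forall y, S y -> K y = 0) -> nondecreasing_on S K).
  { intros K HK x y Hx Hy _. rewrite (HK x Hx), (HK y Hy). lra. }
  pose proof (nondecreasing_on_is_derive_ge0 _ z _
    (Hconst _ (fun y Hy => Rminus_diag_eq _ _ (HFG y Hy))) Hz
    (is_derive_minus F G z l1 l2 DF DG)).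
  pose proof (nondecreasing_on_is_derive_ge0 _ z _
    (Hconst _ (fun y Hy => Rminus_diag_eq _ _ (eq_sym (HFG y Hy)))) Hz
    (is_derive_minus G F z l2 l1 DG DF)).
  unfold minus, plus, opp in *; simpl in *. lra.
Qed.

Lemma interval_MVT (F : R -> R) (x y : R) :
  (forall z, S z -> ex_derive F z) -> S x -> S y -> x <= y ->
  exists c, x <= c <= y /\ F y - F x = Derive F c * (y - x).
Proof.
  intros HD Hx Hy Hxy.
  assert (HS : forall z, Rmin x y <= z <= Rmax x y -> S z).
  { rewrite Rmin_left, Rmax_right by lra.
    intros z Hz. exact (S_interval x y z Hx Hy Hz). }
  destruct (MVT_gen F x y (Derive F)) as [c [Hc E]].
  - intros z Hz. apply Derive_correct, HD, HS. lra.
  - intros z Hz. apply continuity_pt_filterlim, (ex_derive_continuous F z), HD, HS, Hz.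
  - rewrite Rmin_left, Rmax_right in Hc by lra. exists c. split; assumption.
Qed.

Lemma nondecreasing_on_Derive (H : R -> R) :
  (forall z, S z -> ex_derive H z /\ ex_derive (Derive H) z) ->
  (forall z, S z -> 0 <= Derive (Derive H) z) ->
  nondecreasing_on S (Derive H).
Proof.
  intros HD H2 x y Hx Hy Hxy.
  destruct (interval_MVT (Derive H) x y (fun z Hz => proj2 (HD z Hz)) Hx Hy Hxy)
    as [c [Hc E]].
  pose proof (H2 c (S_interval x y c Hx Hy Hc)). nra.
Qed.

Lemma convex_on_of_Derive_nondecreasing (H : R -> R) :
  (forall z, S z -> ex_derive H z) -> nondecreasing_on S (Derive H) ->
  convex_on S H.
Proof.
  intros HD Hmono.
  assert (Hordered : forall x y t, S x -> S y -> x <= y -> 0 <= t <= 1 ->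
            H (t * x + (1 - t) * y) <= t * H x + (1 - t) * H y).
  { intros x y t Hx Hy Hxy Ht.
    set (m := t * x + (1 - t) * y).
    assert (Hm : x <= m <= y) by (unfold m; nra).
    pose proof (S_interval x y m Hx Hy Hm) as Sm.
    destruct (interval_MVT H x m HD Hx Sm ltac:(lra)) as [c1 [Hc1 E1]].
    destruct (interval_MVT H m y HD Sm Hy ltac:(lra)) as [c2 [Hc2 E2]].
    pose proof (Hmono c1 c2 (S_interval x y c1 Hx Hy ltac:(lra))
                  (S_interval x y c2 Hx Hy ltac:(lra)) ltac:(lra)) as Hc12.
    replace (m - x) with ((1 - t) * (y - x)) in E1 by (unfold m; ring).
    replace (y - m) with (t * (y - x)) in E2 by (unfold m; ring).
    assert (0 <= t * (1 - t) * (y - x)) by (apply Rmult_le_pos; nra).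
    nra. }
  intros x y t Hx Hy Ht.
  destruct (Rle_or_lt x y); [apply Hordered; assumption |].
  replace (t * x + (1 - t) * y) with ((1 - t) * y + (1 - (1 - t)) * x) by ring.
  pose proof (Hordered y x (1 - t) Hy Hx ltac:(lra) ltac:(lra)). lra.
Qed.

Lemma convex_on_iff_Derive2_ge0 (H : R -> R) :
  (forall z, S z -> ex_derive H z /\ ex_derive (Derive H) z) ->
  convex_on S H <-> (forall z, S z -> 0 <= Derive (Derive H) z).
Proof.
  intros HD. split.
  - intros Hconv z Hz.
    apply (nondecreasing_on_is_derive_ge0 (Derive H) z); [| assumption |].
    + intros x y Hx Hy Hxy.
      apply (convex_on_Derive_le S); try apply HD; assumption.
    + apply Derive_correct, HD, Hz.
  - intros H2. apply convex_on_of_Derive_nondecreasing.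
    + intros z Hz. apply HD, Hz.
    + apply nondecreasing_on_Derive; assumption.
Qed.

End NondegenerateInterval.

Definition softplus_weight (gamma : R) (f : R -> R) (z : R) : R :=
  Rpower (f z) (/ gamma) / (f z * (1 + Rpower (f z) (/ gamma))).

Definition convexity_margin (gamma : R) (f : R -> R) (z : R) : R :=
  Derive (Derive f) z
  + (/ gamma - 1 - / gamma * (Rpower (f z) (/ gamma) / (1 + Rpower (f z) (/ gamma))))
    * (Derive f z) ^ 2 / f z.

Lemma softplus_weight_pos (gamma : R) (f : R -> R) (z : R) :
  0 < f z -> 0 < softplus_weight gamma f z.
Proof.
  intros Hf. unfold softplus_weight, Rpower.
  pose proof (exp_pos (/ gamma * ln (f z))).
  apply Rdiv_lt_0_compat; [assumption |]. apply Rmult_lt_0_compat; lra.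
Qed.

Lemma is_derive_Hsp (gamma : R) (f : R -> R) (z : R) :
  0 < gamma -> 0 < f z -> ex_derive f z ->
  is_derive (Hsp gamma f) z (softplus_weight gamma f z * Derive f z).
Proof.
  intros Hg Hf Df. unfold Hsp, softplus_weight, Rpower.
  pose proof (exp_pos (/ gamma * ln (f z))).
  auto_derive.
  - repeat split; try assumption; lra.
  - change (fun x => f x) with f. field. repeat split; lra.
Qed.

Lemma is_derive_weight_mul_Derive (gamma : R) (f : R -> R) (z : R) :
  0 < gamma -> 0 < f z -> ex_derive f z -> ex_derive (Derive f) z ->
  is_derive (fun y => softplus_weight gamma f y * Derive f y) z
            (softplus_weight gamma f z * convexity_margin gamma f z).
Proof.
  intros Hg Hf Df D2f. unfold softplus_weight, convexity_margin, Rpower.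
  pose proof (exp_pos (/ gamma * ln (f z))).
  auto_derive.
  - repeat split; try assumption; try lra.
    apply Rgt_not_eq, Rmult_lt_0_compat; lra.
  - change (fun x => f x) with f. change (fun x => Derive f x) with (Derive f).
    field. repeat split; lra.
Qed.

Lemma Derive2_Hsp (S : R -> Prop) (gamma : R) (f : R -> R) (z : R) :
  is_interval S -> (exists a b, S a /\ S b /\ a < b) -> 0 < gamma ->
  (forall y, S y -> 0 < f y) ->
  (forall y, S y -> ex_derive f y /\ ex_derive (Derive f) y) ->
  ex_derive (Derive (Hsp gamma f)) z -> S z ->
  Derive (Derive (Hsp gamma f)) z = softplus_weight gamma f z * convexity_margin gamma f z.
Proof.
  intros HI Hne Hg Hf Hfd DH Hz.
  apply (is_derive_eq_on S HI Hne (Derive (Hsp gamma f))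
           (fun y => softplus_weight gamma f y * Derive f y) z); try assumption.
  - intros y Hy. apply is_derive_unique, is_derive_Hsp; try apply Hfd; auto.
  - apply Derive_correct, DH.
  - apply is_derive_weight_mul_Derive; try apply Hfd; auto.
Qed.

Theorem corollaryG2 (S : R -> Prop) (gamma : R) (f : R -> R) :
  is_interval S ->
  (exists a b, S a /\ S b /\ a < b) ->
  0 < gamma ->
  (forall z, S z -> 0 < f z) ->
  (forall z, S z -> ex_derive f z /\ ex_derive (Derive f) z) ->
  (forall z, S z ->
     ex_derive (Hsp gamma f) z /\ ex_derive (Derive (Hsp gamma f)) z /\
     filterlim (Derive (Derive (Hsp gamma f))) (within S (locally z))
               (locally (Derive (Derive (Hsp gamma f)) z))) ->
  ((forall s, S s -> convex_on S (fun shat => Lm (Hsp gamma f) shat s))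
   <->
   (forall z, S z ->
      Derive (Derive f) z
      + (/ gamma - 1 - / gamma * (Rpower (f z) (/ gamma) / (1 + Rpower (f z) (/ gamma))))
        * (Derive f z) ^ 2 / f z >= 0)).
Proof.
  intros HI Hne Hg Hf Hfd HH.
  assert (HD : forall z, S z ->
            ex_derive (Hsp gamma f) z /\ ex_derive (Derive (Hsp gamma f)) z)
    by (intros z Hz; destruct (HH z Hz) as [D1 [D2 _]]; split; assumption).
  pose proof Hne as [a [_ [Ha _]]].
  transitivity (convex_on S (Hsp gamma f)).
  { split; intros Hconv.
    - apply (convex_on_Lm_iff S _ a), Hconv, Ha.
    - intros s _. apply convex_on_Lm_iff, Hconv. }
  rewrite (convex_on_iff_Derive2_ge0 S HI Hne _ HD).
  split; intros Hpos z Hz; specialize (Hpos z Hz);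
    pose proof (softplus_weight_pos gamma f z (Hf z Hz)) as Hw;
    pose proof (Derive2_Hsp S gamma f z HI Hne Hg Hf Hfd (proj2 (HD z Hz)) Hz) as E;
    fold (convexity_margin gamma f z) in *; rewrite E in *; nra.
Qed.
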